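(* Let $S=(G,-1,q)$ and $S'=(G',-1',q')$ be quaternionic structures. Then (a) $B(S\times S')\cong B(S)\times B(S')$, and (b) $B(S\Delta)\cong B(S)\times G$ as groups.
   Context: A quaternionic structure is a triple $S=(G,-1,q)$ where $G$ is a multiplicative group in which every element is its own inverse, $-1\in G$ is a distinguished element (possibly $-1=1$), $-a:=(-1)a$, and $q:G\times G\to Q$ is a surjective map onto a set $Q$ with distinguished element $0$, such that for all $a,b,c,d\in G$: (Q1) $q(a,-a)=0$; (Q2) $q(a,b)=q(b,a)$; (Q3) $q(a,b)=q(a,c)\iff q(a,bc)=0$; (Q4) $q(a,b)=q(c,d)\iff$ there is $x\in G$ with $q(a,b)=q(a,x)=q(c,x)=q(c,d)$. The abstract 2-Brauer group $B(S)$ is the abelian group, with operation $\ast$, generated by $Q$ subject only to the relations $q(a,b)\ast q(a,c)=q(a,bc)$ for all $a,b,c\in G$. Direct product: for $S_i=(G_i,e_i,q_i)$, $S_1\times S_2=(G_1\times G_2,(e_1,e_2),q_1\times q_2)$ with $(q_1\times q_2)((a_1,a_2),(b_1,b_2))=(q_1(a_1,b_1),q_2(a_2,b_2))$, quaternion set $Q_1\times Q_2$ and zero $(0,0)$. Group extension: $S\Delta=S[x]=(G\times\{1,x\},-1,q_x)$ where $\{1,x\}$ is cyclic of order $2$ (inner direct product notation) and $q_x(ax^\alpha,bx^\beta)=(q(a,b),(-1)^{\alpha\beta}a^\beta b^\alpha)\in Q\times G$ for $a,b\in G$, $\alpha,\beta\in\{0,1\}$, with zero quaternion $(0,1)$ and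 quaternion set the image of $q_x$. Both constructions yield quaternionic structures. *)

From Stdlib Require Import List Bool.
Import ListNotations.
Set Implicit Arguments.

Record qdata := QData {
  G : Type;
  gmul : G -> G -> G;
  gone : G;
  gm1 : G;
  Q : Type;
  qzero : Q;
  qq : G -> G -> Q
}.

Definition gneg (S : qdata) (a : G S) : G S := gmul S (gm1 S) a.

Definition is_qstruct (S : qdata) : Prop :=
  (forall a b c : G S, gmul S a (gmul S b c) = gmul S (gmul S a b) c) /\
  (forall a : G S, gmul S (gone S) a = a) /\
  (forall a : G S, gmul S a (gone S) = a) /\
  (forall a : G S, gmul S a a = gone S) /\
  (forall x : Q S, exists a b, qq S a b = x) /\
  (forall a, qq S a (gneg S a) = qzero S) /\
  (forall a b, qq S a b = qq S b a) /\
  (forall a b c, qq S a b = qq S a c <-> qq S a (gmul S b c) = qzero S) /\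
  (forall a b c d, qq S a b = qq S c d <->
              exists x, qq S a b = qq S a x /\ qq S a x = qq S c x
                        /\ qq S c x = qq S c d).

Definition qprod (S1 S2 : qdata) : qdata :=
  {| G := (G S1 * G S2)%type;
     gmul := fun u v => (gmul S1 (fst u) (fst v), gmul S2 (snd u) (snd v));
     gone := (gone S1, gone S2);
     gm1 := (gm1 S1, gm1 S2);
     Q := (Q S1 * Q S2)%type;
     qzero := (qzero S1, qzero S2);
     qq := fun u v => (qq S1 (fst u) (fst v), qq S2 (snd u) (snd v)) |}.

(** Group extension S[x]: the cyclic group {1, x} is encoded by bool
    (false = 1, true = x); an element a x^alpha of G x {1,x} is (a, alpha). *)
Definition gpow (S : qdata) (a : G S) (beta : bool) : G S :=
  if beta then a else gone S.

Definition qx_fun (S : qdata) (u v : G S * bool) : Q S * G S :=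
  let (a, al) := u in let (b, be) := v in
  (qq S a b,
   gmul S (if al && be then gm1 S else gone S) (gmul S (gpow S a be) (gpow S b al))).

Definition Qx (S : qdata) : Type := { p : Q S * G S | exists u v, qx_fun S u v = p }.

Definition qx (S : qdata) (u v : G S * bool) : Qx S :=
  exist _ (qx_fun S u v) (ex_intro _ u (ex_intro _ v eq_refl)).

(* The zero quaternion (0,1) of S[x]; we take it as q_x(1,1) = (q(1,1),1),
   which equals (0,1) whenever S is quaternionic (Q3 gives q(a,1)=0).
   The zero plays no role in B(S[x]). *)
Definition qext (S : qdata) : qdata :=
  {| G := (G S * bool)%type;
     gmul := fun u v => (gmul S (fst u) (fst v), xorb (snd u) (snd v));
     gone := (gone S, false);
     gm1 := (gm1 S, false);
     Q := Qx S;
     qzero := qx S (gone S, false) (gone S, false);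
     qq := qx S |}.

(** The abstract 2-Brauer group B(S), presented as formal words in the
    generators Q (true = generator, false = its inverse) modulo the
    congruence generated by the abelian group laws and the relations
    q(a,b) * q(a,c) = q(a,bc). *)
Definition word (S : qdata) := list (bool * Q S).

Inductive beq (S : qdata) : word S -> word S -> Prop :=
| beq_refl : forall w, beq w w
| beq_sym : forall u v, beq u v -> beq v u
| beq_trans : forall u v w, beq u v -> beq v w -> beq u w
| beq_app : forall u u' v v', beq u u' -> beq v v' -> beq (u ++ v) (u' ++ v')
| beq_comm : forall x y, beq [x; y] [y; x]
| beq_inv : forall x, beq [(true, x); (false, x)] []
| beq_rel : forall a b c,
    beq [(true, qq S a b); (true, qq S a c)] [(true, qq S a (gmul S b c))].

Definition setoid_iso {T1 T2 : Type}
  (R1 : T1 -> T1 -> Prop) (op1 : T1 -> T1 -> T1)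
  (R2 : T2 -> T2 -> Prop) (op2 : T2 -> T2 -> T2) : Prop :=
  exists f : T1 -> T2,
    (forall u v, R1 u v -> R2 (f u) (f v)) /\
    (forall u v, R2 (f u) (f v) -> R1 u v) /\
    (forall y, exists u, R2 (f u) y) /\
    (forall u v, R2 (f (op1 u v)) (op2 (f u) (f v))).

Arguments beq : clear implicits.
Arguments beq {S}.
Definition B_R (S : qdata) : word S -> word S -> Prop := @beq S.
Definition B_op (S : qdata) : word S -> word S -> word S := @app _.

Definition BB_R (S1 S2 : qdata) (u v : word S1 * word S2) : Prop :=
  beq (fst u) (fst v) /\ beq (snd u) (snd v).
Definition BB_op (S1 S2 : qdata) (u v : word S1 * word S2) : word S1 * word S2 :=
  (fst u ++ fst v, snd u ++ snd v).

Definition BG_R (S : qdata) (u v : word S * G S) : Prop :=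
  beq (fst u) (fst v) /\ snd u = snd v.
Definition BG_op (S : qdata) (u v : word S * G S) : word S * G S :=
  (fst u ++ fst v, gmul S (snd u) (snd v)).
Arguments B_R : clear implicits.
Arguments B_op : clear implicits.
Arguments BB_R : clear implicits.
Arguments BB_op : clear implicits.
Arguments BG_R : clear implicits.
Arguments BG_op : clear implicits.

From Stdlib Require Import List Setoid Morphisms ProofIrrelevance.
Import ListNotations.

(* In
   S x S' the relations hold componentwise, and since q(a,1) = 0 every
   generator splits as (x,y) = (x,0) (0,y); hence the two projections give
   B(S x S') = B(S) x B(S'), with inverse (w1,w2) |-> w1 x 0 + 0 x w2.
   In S[x] the relations q(x,k) q(x,l) = q(x,kl) show that k |-> (0,k) = q(x,k)
   is a homomorphism G -> B(S[x]), and every generator factors as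
   (q(a,b), g) = (q(a,b), 1) (0, g).  Since the second component of q_x is
   multiplicative in each argument, B(S[x]) = B(S) x G via
   (first components, product of second components). *)

#[export] Instance beq_Equivalence (S : qdata) : Equivalence (@beq S).
Proof. split; [exact (@beq_refl S) | exact (@beq_sym S) | exact (@beq_trans S)]. Qed.

#[export] Instance app_beq_Proper (S : qdata) :
  Proper (@beq S ==> @beq S ==> @beq S) (@app (bool * Q S)).
Proof. intros u u' Hu v v' Hv; exact (beq_app Hu Hv). Qed.

#[export] Instance cons_beq_Proper (S : qdata) (e : bool * Q S) :
  Proper (@beq S ==> @beq S) (cons e).
Proof. intros u v H; exact (beq_app (beq_refl [e]) H). Qed.

Section Words.
Variable S : qdata.
Implicit Types (u v w : word S) (e : bool * Q S) (x : Q S).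

Lemma beq_cons_comm e v : beq (e :: v) (v ++ [e]).
Proof.
  induction v as [|e' v IH]; [reflexivity|].
  transitivity (e' :: e :: v).
  - exact (beq_app (beq_comm S e e') (beq_refl v)).
  - simpl; rewrite IH; reflexivity.
Qed.

Lemma beq_app_comm u v : beq (u ++ v) (v ++ u).
Proof.
  induction u as [|e u IH]; simpl.
  - rewrite app_nil_r; reflexivity.
  - rewrite IH, beq_cons_comm, <- app_assoc, <- (beq_cons_comm e u); reflexivity.
Qed.

Lemma beq_pull_pair e1 e2 u v : beq (e1 :: u ++ e2 :: v) ([e1; e2] ++ u ++ v).
Proof.
  change (e2 :: v) with ([e2] ++ v).
  rewrite app_assoc, (beq_app_comm u [e2]), <- app_assoc; reflexivity.
Qed.

Definition neg w : word S := map (fun e => (negb (fst e), snd e)) w.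

Lemma beq_letter_inv s x : beq [(s, x); (negb s, x)] [].
Proof.
  destruct s; [apply beq_inv|].
  rewrite (beq_comm S); apply beq_inv.
Qed.

Lemma beq_app_neg w : beq (w ++ neg w) [].
Proof.
  induction w as [|[s x] w IH]; [reflexivity|].
  simpl; rewrite beq_pull_pair, IH, app_nil_r; apply beq_letter_inv.
Qed.

Lemma beq_neg u v : beq u v -> beq (neg u) (neg v).
Proof.
  intro H.
  transitivity (neg u ++ v ++ neg v); [rewrite beq_app_neg, app_nil_r; reflexivity|].
  rewrite <- H at 1; rewrite app_assoc, (beq_app_comm (neg u)), beq_app_neg; reflexivity.
Qed.

Lemma beq_idempotent_nil e : beq [e; e] [e] -> beq [e] [].
Proof.
  destruct e as [s x]; intro H.
  transitivity ([(s, x); (s, x)] ++ [(negb s, x)]).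
  - change (beq ([(s, x)] ++ []) ([(s, x)] ++ [(s, x); (negb s, x)])).
    rewrite (beq_letter_inv s x); reflexivity.
  - rewrite H; apply beq_letter_inv.
Qed.

Lemma beq_false_of_square_nil x :
  beq [(true, x); (true, x)] [] -> beq [(false, x)] [(true, x)].
Proof.
  intro H.
  transitivity ([(false, x); (true, x)] ++ [(true, x)]).
  - change (beq ([(false, x)] ++ []) ([(false, x)] ++ [(true, x); (true, x)])).
    rewrite H; reflexivity.
  - rewrite (beq_letter_inv false x); reflexivity.
Qed.

End Words.
Arguments neg {S} w.
Arguments beq_neg {S u v} _.

Definition map_word {A B : Type} (phi : A -> B) (w : list (bool * A)) : list (bool * B) :=
  map (fun e => (fst e, phi (snd e))) w.

Lemma map_word_cons {A B : Type} (phi : A -> B) s x w :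
  map_word phi ((s, x) :: w) = (s, phi x) :: map_word phi w.
Proof. reflexivity. Qed.

Lemma map_word_app {A B : Type} (phi : A -> B) u v :
  map_word phi (u ++ v) = map_word phi u ++ map_word phi v.
Proof. apply map_app. Qed.

Lemma map_word_comp {A B C : Type} (phi : A -> B) (psi : B -> C) w :
  map_word psi (map_word phi w) = map_word (fun x => psi (phi x)) w.
Proof. apply map_map. Qed.

Lemma map_word_id {A : Type} (phi : A -> A) w :
  (forall x, phi x = x) -> map_word phi w = w.
Proof.
  intro Hphi; induction w as [|[s x] w IH]; [reflexivity|].
  simpl; rewrite Hphi, IH; reflexivity.
Qed.

Lemma beq_map_word (S T : qdata) (phi : Q S -> Q T) :
  (forall a b c, beq [(true, phi (qq S a b)); (true, phi (qq S a c))]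
                     [(true, phi (qq S a (gmul S b c)))]) ->
  forall u v : word S, beq u v -> beq (S := T) (map_word phi u) (map_word phi v).
Proof.
  intros Hrel u v H; induction H; simpl.
  - reflexivity.
  - symmetry; assumption.
  - etransitivity; eassumption.
  - rewrite !map_word_app; apply beq_app; assumption.
  - apply beq_comm.
  - apply beq_inv.
  - apply Hrel.
Qed.

(* Signs are dropped: every element of G T is its own inverse. *)
Definition gprod_word {A : Type} (T : qdata) (chi : A -> G T) (w : list (bool * A)) : G T :=
  fold_right (fun e acc => gmul T (chi (snd e)) acc) (gone T) w.

Lemma gprod_word_cons {A : Type} (T : qdata) (chi : A -> G T) s x w :
  gprod_word T chi ((s, x) :: w) = gmul T (chi x) (gprod_word T chi w).
Proof. reflexivity. Qed.

Lemma gprod_word_map_word {A B : Type} (T : qdata) (chi : B -> G T) (phi : A -> B) w :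
  gprod_word T chi (map_word phi w) = gprod_word T (fun x => chi (phi x)) w.
Proof. induction w as [|e w IH]; simpl; [|rewrite IH]; reflexivity. Qed.

Section Quaternionic.
Variable S : qdata.
Hypothesis HS : is_qstruct S.
Notation "a * b" := (gmul S a b).
Notation one := (gone S).

Lemma gmulA a b c : a * (b * c) = (a * b) * c.
Proof. destruct HS as [H _]; apply H. Qed.

Lemma gmul1l a : one * a = a.
Proof. destruct HS as (_ & H & _); apply H. Qed.

Lemma gmul1r a : a * one = a.
Proof. destruct HS as (_ & _ & H & _); apply H. Qed.

Lemma gmulxx a : a * a = one.
Proof. destruct HS as (_ & _ & _ & H & _); apply H. Qed.

Lemma qq_surj x : exists a b, qq S a b = x.
Proof. destruct HS as (_ & _ & _ & _ & H & _); apply H. Qed.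

Lemma qqC a b : qq S a b = qq S b a.
Proof. destruct HS as (_ & _ & _ & _ & _ & _ & H & _); apply H. Qed.

Lemma qq1r a : qq S a one = qzero S.
Proof.
  destruct HS as (_ & _ & _ & _ & _ & _ & _ & Q3 & _).
  rewrite <- (gmulxx one) at 1; apply Q3; reflexivity.
Qed.

Lemma qq1l a : qq S one a = qzero S.
Proof. rewrite qqC; apply qq1r. Qed.

Lemma gmulC a b : a * b = b * a.
Proof.
  rewrite <- (gmul1r (a * b)), <- (gmulxx (b * a)), !gmulA.
  rewrite <- (gmulA a b b), gmulxx, gmul1r, gmulxx, gmul1l; reflexivity.
Qed.

Lemma gmulCA a b c : a * (b * c) = b * (a * c).
Proof. rewrite !gmulA, (gmulC a b); reflexivity. Qed.

Lemma beq_qzero_nil s : beq [(s, qzero S)] [].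
Proof.
  assert (H : beq [(true, qzero S)] []).
  { apply beq_idempotent_nil.
    generalize (beq_rel S one one one); rewrite gmul1l, qq1r; trivial. }
  destruct s; [exact H | exact (beq_neg H)].
Qed.

Lemma beq_map_word_qzero {A : Type} (phi : A -> Q S) w :
  (forall x, phi x = qzero S) -> beq (map_word phi w) [].
Proof.
  intro Hphi; induction w as [|[s x] w IH]; [reflexivity|].
  simpl; rewrite Hphi, IH; apply beq_qzero_nil.
Qed.

End Quaternionic.

Lemma gprod_word_app {A : Type} (T : qdata) (HT : is_qstruct T) (chi : A -> G T) u v :
  gprod_word T chi (u ++ v) = gmul T (gprod_word T chi u) (gprod_word T chi v).
Proof.
  induction u as [|e u IH]; simpl.
  - rewrite (gmul1l _ HT); reflexivity.
  - rewrite IH, (gmulA _ HT); reflexivity.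
Qed.

Lemma gprod_word_one {A : Type} (T : qdata) (HT : is_qstruct T) (chi : A -> G T) w :
  (forall x, chi x = gone T) -> gprod_word T chi w = gone T.
Proof.
  intro Hchi; induction w as [|e w IH]; simpl; [reflexivity|].
  rewrite Hchi, IH; apply (gmul1l _ HT).
Qed.

Lemma gprod_word_beq (S T : qdata) (HT : is_qstruct T) (chi : Q S -> G T) :
  (forall a b c, gmul T (chi (qq S a b)) (chi (qq S a c)) = chi (qq S a (gmul S b c))) ->
  forall u v : word S, beq u v -> gprod_word T chi u = gprod_word T chi v.
Proof.
  intros Hrel u v H; induction H; simpl.
  - reflexivity.
  - symmetry; assumption.
  - etransitivity; eassumption.
  - rewrite !(gprod_word_app T HT); congruence.
  - apply (gmulCA _ HT).
  - rewrite (gmul1r _ HT); apply (gmulxx _ HT).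
  - rewrite !(gmul1r _ HT); apply Hrel.
Qed.

Lemma setoid_iso_of_inverse {T1 T2 : Type}
  (R1 : T1 -> T1 -> Prop) (op1 : T1 -> T1 -> T1)
  (R2 : T2 -> T2 -> Prop) (op2 : T2 -> T2 -> T2)
  (f : T1 -> T2) (g : T2 -> T1) :
  Equivalence R1 ->
  (forall u v, R1 u v -> R2 (f u) (f v)) ->
  (forall y z, R2 y z -> R1 (g y) (g z)) ->
  (forall u, R1 (g (f u)) u) ->
  (forall y, R2 (f (g y)) y) ->
  (forall u v, R2 (f (op1 u v)) (op2 (f u) (f v))) ->
  setoid_iso R1 op1 R2 op2.
Proof.
  intros HR1 Hf Hg Hgf Hfg Hop; exists f; repeat split.
  - exact Hf.
  - intros u v H.
    rewrite <- (Hgf u), <- (Hgf v); exact (Hg _ _ H).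
  - intro y; exists (g y); apply Hfg.
  - exact Hop.
Qed.

Section Product.
Variables S S' : qdata.
Hypothesis HS : is_qstruct S.
Hypothesis HS' : is_qstruct S'.
Notation P := (qprod S S').

Definition qprod_split (w : word P) : word S * word S' :=
  (map_word (fun x : Q S * Q S' => fst x) w, map_word (fun x : Q S * Q S' => snd x) w).

Definition qprod_join (u : word S * word S') : word P :=
  map_word (fun x : Q S => (x, qzero S')) (fst u) ++
  map_word (fun y : Q S' => (qzero S, y)) (snd u).

Lemma qprod_split_beq u v : beq u v -> BB_R S S' (qprod_split u) (qprod_split v).
Proof.
  intro H; split.
  - apply (beq_map_word P S) with (2 := H); intros a b c; apply beq_rel.
  - apply (beq_map_word P S') with (2 := H); intros a b c; apply beq_rel.
Qed.

Lemma qprod_join_beq u v : BB_R S S' u v -> beq (qprod_join u) (qprod_join v).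
Proof.
  intros [H1 H2]; apply beq_app.
  - apply (beq_map_word S P) with (2 := H1); intros a b c.
    generalize (beq_rel P (a, gone S') (b, gone S') (c, gone S')); simpl.
    rewrite (gmul1l _ HS'), (qq1r _ HS'); trivial.
  - apply (beq_map_word S' P) with (2 := H2); intros a b c.
    generalize (beq_rel P (gone S, a) (gone S, b) (gone S, c)); simpl.
    rewrite (gmul1l _ HS), (qq1r _ HS); trivial.
Qed.

Lemma beq_qprod_letter s (x : Q S) (y : Q S') :
  beq [(s, ((x, qzero S') : Q P)); (s, ((qzero S, y) : Q P))] [(s, ((x, y) : Q P))].
Proof.
  assert (H : beq [(true, ((x, qzero S') : Q P)); (true, ((qzero S, y) : Q P))]
                  [(true, ((x, y) : Q P))]).
  { destruct (qq_surj _ HS x) as (a & b & <-), (qq_surj _ HS' y) as (c & d & <-).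
    generalize (beq_rel P (a, c) (b, gone S') (gone S, d)); simpl.
    rewrite (gmul1l _ HS'), (gmul1r _ HS), (qq1r _ HS), (qq1r _ HS'); trivial. }
  destruct s; [exact H | exact (beq_neg H)].
Qed.

Lemma qprod_join_split w : beq (qprod_join (qprod_split w)) w.
Proof.
  induction w as [|[s [x y]] w IH]; [reflexivity|].
  unfold qprod_join, qprod_split in *; cbn [fst snd] in *.
  rewrite !map_word_cons, <- app_comm_cons; cbn [fst snd].
  rewrite (beq_pull_pair P), beq_qprod_letter, IH; reflexivity.
Qed.

Lemma qprod_split_join u : BB_R S S' (qprod_split (qprod_join u)) u.
Proof.
  destruct u as [w1 w2]; unfold qprod_join, qprod_split; split; cbn [fst snd];
    rewrite !map_word_app, !map_word_comp.
  - rewrite (map_word_id _ w1), (beq_map_word_qzero _ HS) by reflexivity.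
    rewrite app_nil_r; reflexivity.
  - rewrite (map_word_id _ w2), (beq_map_word_qzero _ HS' _ w1) by reflexivity.
    reflexivity.
Qed.

Lemma B_qprod_iso : setoid_iso (B_R P) (B_op P) (BB_R S S') (BB_op S S').
Proof.
  apply (setoid_iso_of_inverse _ _ _ _ qprod_split qprod_join).
  - apply beq_Equivalence.
  - exact qprod_split_beq.
  - exact qprod_join_beq.
  - exact qprod_join_split.
  - exact qprod_split_join.
  - intros u v; unfold qprod_split, B_op, BB_op; rewrite !map_word_app; split; reflexivity.
Qed.

End Product.

Section Extension.
Variable S : qdata.
Hypothesis HS : is_qstruct S.
Notation E := (qext S).
Notation "a * b" := (gmul S a b).
Notation one := (gone S).

Lemma Qx_eq (p p' : Qx S) : proj1_sig p = proj1_sig p' -> p = p'.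
Proof. apply eq_sig_hprop; intros; apply proof_irrelevance. Qed.

Lemma beq_rel_qext u v w (p1 p2 p3 : Qx S) :
  qx_fun S u v = proj1_sig p1 -> qx_fun S u w = proj1_sig p2 ->
  qx_fun S u (fst v * fst w, xorb (snd v) (snd w)) = proj1_sig p3 ->
  beq (S := E) [(true, p1); (true, p2)] [(true, p3)].
Proof.
  intros H1 H2 H3.
  rewrite <- (Qx_eq (qx S u v) p1 H1), <- (Qx_eq (qx S u w) p2 H2),
    <- (Qx_eq (qx S u _) p3 H3).
  apply (beq_rel E).
Qed.

Lemma qx_fun_image_Q x : exists u v, qx_fun S u v = (x, one).
Proof.
  destruct (qq_surj _ HS x) as (a & b & Hx); exists (a, false), (b, false); simpl.
  rewrite Hx, !(gmul1l _ HS); reflexivity.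
Qed.

Lemma qx_fun_image_G k : exists u v, qx_fun S u v = (qzero S, k).
Proof.
  exists (k, false), (one, true); simpl.
  rewrite (qq1r _ HS), (gmul1l _ HS), (gmul1r _ HS); reflexivity.
Qed.

Definition qx_of_Q (x : Q S) : Q E := exist _ (x, one) (qx_fun_image_Q x).
Definition qx_of_G (k : G S) : Q E := exist _ (qzero S, k) (qx_fun_image_G k).

Ltac qsimpl := simpl; rewrite ?(qq1r _ HS), ?(qq1l _ HS), ?(gmul1l _ HS), ?(gmul1r _ HS).

Lemma beq_qx_of_G_mul k l : beq (S := E) [(true, qx_of_G k); (true, qx_of_G l)] [(true, qx_of_G (k * l))].
Proof. apply (beq_rel_qext (one, true) (k, false) (l, false)); qsimpl; reflexivity. Qed.

Lemma beq_qx_of_G_one : beq (S := E) [(true, qx_of_G one)] [].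
Proof.
  apply beq_idempotent_nil.
  rewrite beq_qx_of_G_mul, (gmul1l _ HS); reflexivity.
Qed.

Lemma beq_qx_of_G_sign s k : beq (S := E) [(s, qx_of_G k)] [(true, qx_of_G k)].
Proof.
  destruct s; [reflexivity|].
  apply beq_false_of_square_nil.
  rewrite beq_qx_of_G_mul, (gmulxx _ HS); exact beq_qx_of_G_one.
Qed.

Lemma beq_qx_ff a b :
  beq (S := E) [(true, qx S (a, false) (b, false))] [(true, qx_of_Q (qq S a b)); (true, qx_of_G one)].
Proof.
  replace (qx S (a, false) (b, false)) with (qx_of_Q (qq S a b))
    by (apply Qx_eq; qsimpl; reflexivity).
  change (beq ([(true, qx_of_Q (qq S a b))] ++ [])
              ([(true, qx_of_Q (qq S a b))] ++ [(true, qx_of_G one)])).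
  rewrite beq_qx_of_G_one; reflexivity.
Qed.

Lemma beq_qx_ft a b :
  beq (S := E) [(true, qx S (a, false) (b, true))] [(true, qx_of_Q (qq S a b)); (true, qx_of_G a)].
Proof.
  symmetry; apply (beq_rel_qext (a, false) (b, false) (one, true)); qsimpl; reflexivity.
Qed.

Lemma beq_qx_tf a b :
  beq (S := E) [(true, qx S (a, true) (b, false))] [(true, qx_of_Q (qq S a b)); (true, qx_of_G b)].
Proof.
  symmetry; apply (beq_rel_qext (b, false) (a, false) (one, true)); qsimpl;
    rewrite ?(qqC _ HS a b); reflexivity.
Qed.

Lemma beq_qx_tt a b :
  beq (S := E) [(true, qx S (a, true) (b, true))]
               [(true, qx_of_Q (qq S a b)); (true, qx_of_G (gm1 S * (a * b)))].
Proof.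
  assert (H : beq (S := E) [(true, qx S (a, true) (b, false)); (true, qx_of_G (gm1 S * a))]
                           [(true, qx S (a, true) (b, true))]).
  { apply (beq_rel_qext (a, true) (b, false) (one, true)); qsimpl; reflexivity. }
  rewrite <- H.
  change (beq (([(true, qx S (a, true) (b, false))] : word E) ++ [(true, qx_of_G (gm1 S * a))])
              ([(true, qx_of_Q (qq S a b))] ++ [(true, qx_of_G (gm1 S * (a * b)))])).
  rewrite beq_qx_tf.
  change (beq ([(true, qx_of_Q (qq S a b))] ++ [(true, qx_of_G b); (true, qx_of_G (gm1 S * a))])
              ([(true, qx_of_Q (qq S a b))] ++ [(true, qx_of_G (gm1 S * (a * b)))])).
  rewrite beq_qx_of_G_mul, (gmulCA _ HS), (gmulC _ HS b a); reflexivity.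
Qed.

Lemma beq_qx_decomp u v :
  beq (S := E) [(true, qx S u v)]
               [(true, qx_of_Q (fst (qx_fun S u v))); (true, qx_of_G (snd (qx_fun S u v)))].
Proof.
  destruct u as [a []], v as [b []]; simpl.
  - apply beq_qx_tt.
  - rewrite !(gmul1l _ HS); apply beq_qx_tf.
  - rewrite (gmul1l _ HS), (gmul1r _ HS); apply beq_qx_ft.
  - rewrite !(gmul1l _ HS); apply beq_qx_ff.
Qed.

Lemma beq_Qx_decomp s (p : Q E) :
  beq (S := E) [(s, p)] [(s, qx_of_Q (fst (proj1_sig p))); (true, qx_of_G (snd (proj1_sig p)))].
Proof.
  destruct (proj2_sig p) as (u & v & Hp).
  rewrite <- (Qx_eq (qx S u v) p Hp); simpl proj1_sig.
  destruct s; [apply beq_qx_decomp|].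
  rewrite (beq_neg (beq_qx_decomp u v)); simpl.
  change (beq ([(false, qx_of_Q (fst (qx_fun S u v)))] ++ [(false, qx_of_G (snd (qx_fun S u v)))])
              ([(false, qx_of_Q (fst (qx_fun S u v)))] ++ [(true, qx_of_G (snd (qx_fun S u v)))])).
  rewrite beq_qx_of_G_sign; reflexivity.
Qed.

Lemma qx_fun_snd_mul u v w :
  snd (qx_fun S u v) * snd (qx_fun S u w)
  = snd (qx_fun S u (fst v * fst w, xorb (snd v) (snd w))).
Proof.
  destruct u as [a []], v as [b []], w as [c []]; simpl;
    rewrite ?(gmul1l _ HS), ?(gmul1r _ HS); try reflexivity.
  - rewrite <- (gmulA _ HS), (gmulCA _ HS (a * b) (gm1 S)), (gmulA _ HS), (gmulxx _ HS),
      (gmul1l _ HS), <- (gmulA _ HS), (gmulCA _ HS b a), (gmulA _ HS), (gmulxx _ HS),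
      (gmul1l _ HS); reflexivity.
  - rewrite <- !(gmulA _ HS); reflexivity.
  - rewrite (gmulCA _ HS b (gm1 S)), (gmulCA _ HS b a); reflexivity.
  - apply (gmulxx _ HS).
Qed.

Definition qext_split (w : word E) : word S * G S :=
  (map_word (fun p : Qx S => fst (proj1_sig p)) w,
   gprod_word S (fun p : Qx S => snd (proj1_sig p)) w).

Definition qext_join (u : word S * G S) : word E :=
  map_word qx_of_Q (fst u) ++ [(true, qx_of_G (snd u))].

Lemma qext_split_beq u v : beq u v -> BG_R S (qext_split u) (qext_split v).
Proof.
  intro H; split.
  - apply (beq_map_word E S) with (2 := H); intros [a al] [b be] [c ga]; apply beq_rel.
  - apply (gprod_word_beq E S HS) with (2 := H); intros a b c; apply qx_fun_snd_mul.
Qed.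

Lemma qext_join_beq u v : BG_R S u v -> beq (qext_join u) (qext_join v).
Proof.
  intros [H1 H2]; unfold qext_join; rewrite H2; apply beq_app; [|reflexivity].
  apply (beq_map_word S E) with (2 := H1); intros a b c.
  apply (beq_rel_qext (a, false) (b, false) (c, false)); qsimpl; reflexivity.
Qed.

Lemma qext_join_split w : beq (qext_join (qext_split w)) w.
Proof.
  induction w as [|[s p] w IH]; [exact beq_qx_of_G_one|].
  unfold qext_join, qext_split in *; cbn [fst snd] in *.
  rewrite !map_word_cons, gprod_word_cons, <- beq_qx_of_G_mul, <- app_comm_cons.
  rewrite (beq_pull_pair E), IH, <- beq_Qx_decomp; reflexivity.
Qed.

Lemma qext_split_join u : BG_R S (qext_split (qext_join u)) u.
Proof.
  destruct u as [w h]; unfold qext_join, qext_split; split; cbn [fst snd].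
  - rewrite map_word_app, map_word_comp, (map_word_id _ w) by reflexivity.
    cbn; rewrite (beq_qzero_nil _ HS), app_nil_r; reflexivity.
  - rewrite (gprod_word_app S HS), gprod_word_map_word, (gprod_word_one S HS) by reflexivity.
    cbn; rewrite (gmul1l _ HS), (gmul1r _ HS); reflexivity.
Qed.

Lemma B_qext_iso : setoid_iso (B_R E) (B_op E) (BG_R S) (BG_op S).
Proof.
  apply (setoid_iso_of_inverse _ _ _ _ qext_split qext_join).
  - apply beq_Equivalence.
  - exact qext_split_beq.
  - exact qext_join_beq.
  - exact qext_join_split.
  - exact qext_split_join.
  - intros u v; unfold qext_split, B_op, BG_op; cbn [fst snd].
    rewrite map_word_app, (gprod_word_app S HS); split; reflexivity.
Qed.
End Extension.

Theorem proposition4 (S S' : qdata) :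
  is_qstruct S -> is_qstruct S' ->
  setoid_iso (B_R (qprod S S')) (B_op (qprod S S')) (BB_R S S') (BB_op S S') /\
  setoid_iso (B_R (qext S)) (B_op (qext S)) (BG_R S) (BG_op S).
Proof.
  intros HS HS'; split.
  - exact (B_qprod_iso S S' HS HS').
  - exact (B_qext_iso S HS).
Qed.
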